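(* Let $\mathbb{K}$ be a field of characteristic $0$ and $R=\mathbb{K}[\mathbf t,\mathbf x]=\mathbb{K}[t_1,\dots,t_d,x_1,\dots,x_{n-d}]$. Let $I\subseteq R$ be a primary ideal of dimension $d$, $P=\sqrt I$, where $\mathbf t$ is a set of $d$ variables algebraically independent in $R/I$ (independent variables) and $\mathbf x$ are the remaining (dependent) variables. Let $S=\mathbb{K}(\mathbf t)[\mathbf x]$ and $IS$ the extension of $I$ to $S$. (1) If $\{D_i\}_i\subseteq W_S$ is a set of Noetherian operators for $IS$, then any lift $\{N_i\}_i\subseteq W_R$ of $\{D_i\}_i$ is a set of Noetherian operators for $I$. (2) Conversely, if $\{N_i\}_i\subseteq W_R$ is a set of Noetherian operators for $I$ involving only the differentials $\partial_{\mathbf x}$ (and not $\partial_{\mathbf t}$), then their images $\{D_i\}_i\subseteq W_S$ form a set of Noetherian operators for $IS$.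
   Context: $W_R=R\langle\partial_{t_1},\dots,\partial_{t_d},\partial_{x_1},\dots,\partial_{x_{n-d}}\rangle$ is the Weyl algebra, and $W_S=S\otimes_R W_R$ the ring of differential operators with coefficients in $S$, both acting by multiplication and partial differentiation (written $D\bullet f$). For a ring $T\in\{R,S\}$ and an ideal $J\subseteq T$, a set $N\subseteq W_T$ is a set of Noetherian operators for $J$ if for all $f\in T$: $f\in J\iff D\bullet f\in\sqrt J$ for all $D\in N$. A lift of $D\in W_S$ is an element $uD\in W_R$ with $u\in\mathbb{K}[\mathbf t]\setminus\{0\}$ (such $u$ exists by clearing denominators); $W_R\hookrightarrow W_S$ is the natural inclusion. *)

From HB Require Import structures.
From mathcomp Require Import all_boot all_order all_algebra.
From mathcomp Require Import fraction generic_quotient.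
From mathcomp.multinomials Require Import mpoly.
Set Implicit Arguments. Unset Strict Implicit. Unset Printing Implicit Defensive.
Import GRing.Theory.
Local Open Scope ring_scope.

Section Ideals.
Variable T : comNzRingType.

Definition is_ideal (J : T -> Prop) : Prop :=
  [/\ J 0, (forall a b, J a -> J b -> J (a + b)) & (forall r a, J a -> J (r * a))].

Definition radical (J : T -> Prop) : T -> Prop := fun f => exists k : nat, J (f ^+ k).

Definition is_prime_ideal (J : T -> Prop) : Prop :=
  [/\ is_ideal J, ~ J 1 & forall a b, J (a * b) -> J a \/ J b].

Definition is_primary_ideal (J : T -> Prop) : Prop :=
  [/\ is_ideal J, ~ J 1 & forall a b, J (a * b) -> J a \/ radical J b].

Definition has_prime_chain (J : T -> Prop) (k : nat) : Prop :=
  exists P : nat -> T -> Prop,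
    [/\ (forall i, (i <= k)%N -> is_prime_ideal (P i)),
        (forall f, J f -> P 0%N f) &
        (forall i, (i < k)%N ->
           (forall f, P i f -> P i.+1 f) /\ exists f, P i.+1 f /\ ~ P i f)].

Definition krull_dim (J : T -> Prop) (k : nat) : Prop :=
  has_prime_chain J k /\ ~ has_prime_chain J k.+1.
End Ideals.

(* An operator  D = sum_mu c_mu d^mu  with coefficients in U and d+m partial
   derivatives is encoded (normally ordered, coefficients on the left) as the
   element of {mpoly U[d+m]} whose coefficient at the exponent mu is c_mu.
   Variables 0..d-1 (lshift) are the t's, variables d..d+m-1 (rshift) the x's. *)
Section Operators.
Variables (U : comNzRingType) (d m : nat).
Variable der : 'I_(d + m) -> U -> U.

Definition dpow (mu : 'X_{1..d + m}) (f : U) : U :=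
  foldr (fun i => iter (mu i) (der i)) f (enum 'I_(d + m)).

Definition act (D : {mpoly U[d + m]}) (f : U) : U :=
  \sum_(mu <- msupp D) D@_mu * dpow mu f.

Definition noetherian_ops (J : U -> Prop) (Idx : Type) (N : Idx -> {mpoly U[d + m]}) :=
  forall f : U, J f <-> (forall i, radical J (act (N i) f)).
End Operators.

Section Rings.
Variables (K : fieldType) (d m : nat).

Definition Kt := {mpoly K[d]}.
(* R = K[t, x], realised as K[t][x] *)
Definition Rring := {mpoly Kt[m]}.
Definition Ktf := {fraction Kt}.
Definition Sring := {mpoly Ktf[m]}.
Definition WR := {mpoly Rring[d + m]}.
Definition WS := {mpoly Sring[d + m]}.

Local Notation "x %:F" := (@FracField.tofrac Kt x).

Definition fderiv (j : 'I_d) (q : Ktf) : Ktf :=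
  let r := repr q in
  ((mderiv j \n_r * \d_r - \n_r * mderiv j \d_r)%:F) / ((\d_r ^+ 2)%:F).

Definition derR (i : 'I_(d + m)) (f : Rring) : Rring :=
  match split i with
  | inl j => map_mpoly (mderiv j) f
  | inr k => mderiv k f
  end.

Definition derS (i : 'I_(d + m)) (f : Sring) : Sring :=
  match split i with
  | inl j => map_mpoly (fderiv j) f
  | inr k => mderiv k f
  end.

Definition embRS (f : Rring) : Sring := map_mpoly (fun c : Kt => c%:F) f.
Definition embW (N : WR) : WS := map_mpoly embRS N.

Definition ext_ideal (I : Rring -> Prop) : Sring -> Prop :=
  fun g => exists (k : nat) (c : 'I_k -> Sring) (f : 'I_k -> Rring),
    (forall i, I (f i)) /\ g = \sum_(i < k) c i * embRS (f i).

(* t_1..t_d are algebraically independent in R/I *)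
Definition t_independent (I : Rring -> Prop) : Prop :=
  forall u : Kt, I (u%:MP) -> u = 0.

Definition is_lift (N : WR) (D : WS) : Prop :=
  exists u : Kt, u != 0 /\ embW N = ((u%:F)%:MP : Sring) *: D.

Definition only_dx (N : WR) : Prop :=
  forall mu : 'X_{1..d + m}, mu \in msupp N -> forall j : 'I_d, mu (lshift m j) = 0%N.
End Rings.

From HB Require Import structures.
From mathcomp Require Import all_boot all_order all_algebra.
From mathcomp Require Import fraction generic_quotient.
From mathcomp.multinomials Require Import mpoly.
From mathcomp Require Import ring.
Set Implicit Arguments. Unset Strict Implicit. Unset Printing Implicit Defensive.
Import GRing.Theory.
Local Open Scope ring_scope.

(* Everything follows by clearing denominators.  Every g in S = K(t)[x] is
   1/s times the image of some f in R with 0 <> s in K[t], and every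
   element of IS is such a multiple of an element of I.  Since I is primary and
   no power of a nonzero s in K[t] lies in I, s f in I forces f in I; hence
   IS meets R in I, and sqrt(IS) meets R in sqrt I.  A lift u D acts on R as
   u times D, and an operator without d/dt commutes with multiplication by
   K(t); so both Noetherian-operator conditions transfer between R and S up to
   a unit factor. *)

Section Radical.
Variables (T : comNzRingType) (J : T -> Prop).
Hypothesis JM : forall r a, J a -> J (r * a).

Lemma radicalMl r a : radical J a -> radical J (r * a).
Proof. by case=> k Ja; exists k; rewrite exprMn; apply: JM. Qed.

End Radical.

Section UnitMultiple.
Variables (T : comUnitRingType) (J : T -> Prop).
Hypothesis JM : forall r a, J a -> J (r * a).

Lemma idealMl_unit c a : c \is a GRing.unit -> J (c * a) <-> J a.
Proof.
move=> cU; split=> [Jca|]; last exact: JM.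
by rewrite -(mulKr cU a); apply: JM.
Qed.

Lemma radicalMl_unit c a : c \is a GRing.unit -> radical J (c * a) <-> radical J a.
Proof.
move=> cU; split=> [|]; last exact: radicalMl.
by move/(radicalMl JM c^-1); rewrite mulKr.
Qed.

End UnitMultiple.

Section MapMpoly.
Variables (n : nat) (R S : nzRingType) (g : R -> S).
Hypothesis g0 : g 0 = 0.

Lemma mcoeff_map_mpoly_id0 (p : {mpoly R[n]}) mu : (map_mpoly g p)@_mu = g p@_mu.
Proof.
rewrite /map_mpoly /mmap raddf_sum /=.
rewrite (eq_bigr (fun nu => g p@_nu * (nu == mu)%:R)); last first.
  by move=> nu _; rewrite mmap1_id /= mcoeffCM mcoeffX.
have [mu_p|mu_np] := boolP (mu \in msupp p).
  rewrite (bigD1_seq mu) ?msupp_uniq //= eqxx mulr1 big1 ?addr0 //.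
  by move=> nu /negbTE ->; rewrite mulr0.
rewrite big1_seq; last first.
  by move=> nu /andP[_ nu_p]; case: eqP nu_p => [->|_ _]; rewrite ?(negbTE mu_np) ?mulr0.
by move: mu_np; rewrite -mcoeff_eq0 => /eqP ->; rewrite g0.
Qed.

Lemma msupp_map_mpoly_id0 (p : {mpoly R[n]}) : {subset msupp (map_mpoly g p) <= msupp p}.
Proof.
move=> mu; rewrite !mcoeff_msupp mcoeff_map_mpoly_id0.
by apply: contraNN => /eqP ->; rewrite g0.
Qed.

End MapMpoly.

Section Action.
Variables (U : comNzRingType) (d m : nat) (der : 'I_(d + m) -> U -> U).

Lemma actE_seq (D : {mpoly U[d + m]}) (s : seq 'X_{1..d + m}) f :
  uniq s -> {subset msupp D <= s} ->
  act der D f = \sum_(mu <- s) D@_mu * dpow der mu f.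
Proof.
move=> s_uniq sub; rewrite /act [RHS](bigID (mem (msupp D))) /=.
rewrite [X in _ + X]big1 ?addr0; last first.
  by move=> mu; rewrite -mcoeff_eq0 => /eqP ->; rewrite mul0r.
rewrite -[RHS]big_filter; apply: perm_big.
apply: uniq_perm; rewrite ?msupp_uniq ?filter_uniq // => mu.
by rewrite mem_filter; case: (boolP (mu \in msupp D)) => [/sub->|].
Qed.

Lemma actZ (c : U) (D : {mpoly U[d + m]}) f :
  act der (c *: D) f = c * act der D f.
Proof.
rewrite (actE_seq _ (msupp_uniq D)); last exact: msuppZ_le.
by rewrite /act mulr_sumr; apply: eq_bigr => mu _; rewrite mcoeffZ mulrA.
Qed.

Lemma dpowMl (c : U) (mu : 'X_{1..d + m}) h :
  (forall i, mu i != 0%N -> forall x, der i (c * x) = c * der i x) ->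
  dpow der mu (c * h) = c * dpow der mu h.
Proof.
move=> derC; rewrite /dpow; elim: (enum _) => //= i s ->.
have [->|/derC derCi] := eqVneq (mu i) 0%N; first by [].
by elim: (mu i) => //= k ->.
Qed.

Lemma actMl (c : U) (D : {mpoly U[d + m]}) h :
  (forall mu, mu \in msupp D -> forall i, mu i != 0%N ->
     forall x, der i (c * x) = c * der i x) ->
  act der D (c * h) = c * act der D h.
Proof.
move=> derC; rewrite /act mulr_sumr; apply: eq_big_seq => mu mu_D.
rewrite dpowMl; first by rewrite mulrCA.
exact: derC.
Qed.

End Action.

Section ActionMorphism.
Variables (T U : comNzRingType) (d m : nat).
Variables (derT : 'I_(d + m) -> T -> T) (derU : 'I_(d + m) -> U -> U).
Variable phi : {rmorphism T -> U}.
Hypothesis phi_der : forall i x, derU i (phi x) = phi (derT i x).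

Lemma dpow_rmorph mu f : dpow derU mu (phi f) = phi (dpow derT mu f).
Proof.
rewrite /dpow; elim: (enum _) => //= i s ->.
by elim: (mu i) => //= k ->.
Qed.

Lemma act_map_mpoly (N : {mpoly T[d + m]}) f :
  act derU (map_mpoly phi N) (phi f) = phi (act derT N f).
Proof.
rewrite (actE_seq _ _ (msupp_uniq N)); last exact: msupp_map_mpoly_id0 (rmorph0 _) N.
rewrite /act rmorph_sum; apply: eq_bigr => mu _.
by rewrite mcoeff_map_mpoly dpow_rmorph rmorphM.
Qed.

End ActionMorphism.

Section FractionDenominators.
Variable R : idomainType.
Local Open Scope quotient_scope.
Local Notation "x %:F" := (@FracField.tofrac R x).

Lemma tofracE c : c%:F = \pi_({fraction R}) (Ratio c 1).
Proof. by unlock FracField.tofrac. Qed.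

Lemma repr_tofrac c : \n_(repr c%:F) = \d_(repr c%:F) * c.
Proof.
have := FracField.equivf_l (Ratio c 1).
by rewrite -tofracE !numden_Ratio ?oner_eq0 // mulr1.
Qed.

Lemma tofrac_clear_denom (q : {fraction R}) : exists s a, s != 0 /\ s%:F * q = a%:F.
Proof.
exists \d_(repr q), \n_(repr q); split; first exact: denom_ratioP.
rewrite -[X in _ * X](reprK q) !tofracE.
transitivity (\pi_({fraction R}) (FracField.mulf (Ratio \d_(repr q) 1) (repr q))).
  by symmetry; exact: FracField.pi_mul.
apply/eqmodP.
rewrite /= FracField.equivfE /FracField.mulf !numden_Ratio ?mul1r ?mulr1 //.
all: by rewrite ?oner_neq0 ?denom_ratioP.
Qed.

End FractionDenominators.

Section Extension.
Variables (K : fieldType) (d m : nat).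
Local Notation R := (Rring K d m).
Local Notation S := (Sring K d m).
Local Notation "x %:F" := (@FracField.tofrac (Kt K d) x).

HB.instance Definition _ :=
  GRing.RMorphism.copy (@embRS K d m) (map_mpoly (@FracField.tofrac (Kt K d))).

Lemma embRSC (s : Kt K d) : @embRS K d m s%:MP = (s%:F)%:MP.
Proof. exact: map_mpolyC. Qed.

Lemma embRS_inj : injective (@embRS K d m).
Proof.
move=> f g fg; apply/mpolyP => mu; apply/eqP.
by rewrite -tofrac_eq -!(mcoeff_map_mpoly (@FracField.tofrac _)) -/(embRS _) fg.
Qed.

Lemma fderiv_tofrac (j : 'I_d) c : fderiv j c%:F = (mderiv j c)%:F.
Proof.
rewrite /fderiv repr_tofrac; set n := \d_(repr c%:F).
have n_neq0 : n != 0 := denom_ratioP _.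
have -> : (mderiv j (n * c) * n - n * c * mderiv j n) = mderiv j c * n ^+ 2.
  by rewrite mderivM; ring.
by rewrite rmorphM /= mulfK // tofrac_eq0 expf_neq0.
Qed.

Lemma mcoeff_embRS (f : R) mu : (embRS f)@_mu = (f@_mu)%:F.
Proof. exact: mcoeff_map_mpoly. Qed.

Lemma derS_embRS i (f : R) : derS i (embRS f) = embRS (derR i f).
Proof.
rewrite /derS /derR; case: (split i) => [j|k]; apply/mpolyP => mu; last first.
  by rewrite mcoeff_mderiv !mcoeff_embRS mcoeff_mderiv raddfMn.
have fderiv0 : @fderiv K d j 0 = 0.
  by have := fderiv_tofrac j 0; rewrite mderiv0 !rmorph0.
transitivity (fderiv j (embRS f)@_mu); first apply: (mcoeff_map_mpoly_id0 fderiv0).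
rewrite [X in fderiv j X]mcoeff_embRS fderiv_tofrac [RHS]mcoeff_embRS; congr _%:F.
symmetry; apply: (mcoeff_map_mpoly_id0 (mderiv0 _ j)).
Qed.

Lemma act_embW (N : WR K d m) (f : R) :
  act (@derS K d m) (embW N) (embRS f) = embRS (act (@derR K d m) N f).
Proof. exact: act_map_mpoly derS_embRS N f. Qed.

Lemma embRS_clear_denom (g : S) : exists s f, s != 0 /\ (s%:F)%:MP * g = embRS f.
Proof.
elim/mpolyind: g => [|c mu p _ _ [s2 [f2 [s2_neq0 e2]]]].
  by exists 1, 0; rewrite oner_neq0 mulr0 rmorph0.
have [s1 [a [s1_neq0 e1]]] := tofrac_clear_denom c.
exists (s1 * s2), ((s2 * a) *: 'X_[mu] + s1 *: f2); split; first by rewrite mulf_neq0.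
rewrite rmorphD /= /embRS !map_mpolyZ map_mpolyX -[map_mpoly _ f2]/(embRS f2) -e2.
rewrite !mul_mpolyC scalerDr !scalerA !rmorphM /= -e1.
by congr (_ *: _ + _); ring.
Qed.

Lemma mpolyC_tofrac_unit (s : Kt K d) : s != 0 -> (s%:F)%:MP \is a @GRing.unit S.
Proof.
move=> s_neq0; apply/unitrP; exists ((s%:F)^-1)%:MP.
by rewrite -!mpolyCM mulVf ?mulfV ?tofrac_eq0.
Qed.

Lemma act_lift (N : WR K d m) (D : WS K d m) (f : R) : is_lift N D ->
  exists2 u, u != 0 &
    embRS (act (@derR K d m) N f) = (u%:F)%:MP * act (@derS K d m) D (embRS f).
Proof. by case=> u [u_neq0 NuD]; exists u; rewrite // -act_embW NuD actZ. Qed.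

Lemma act_only_dx (N : WR K d m) (c : Ktf K d) (h : S) : only_dx N ->
  act (@derS K d m) (embW N) (c%:MP * h) = c%:MP * act (@derS K d m) (embW N) h.
Proof.
move=> N_dx; apply: actMl => mu /(msupp_map_mpoly_id0 (rmorph0 _)) mu_N i mu_i x.
rewrite /derS; case: splitP => [j ij|k _]; last exact: mderiv_mulC.
by move: mu_i; rewrite (_ : i = lshift m j) ?N_dx ?eqxx //; apply: val_inj.
Qed.

End Extension.

Section ExtendedIdeal.
Variables (K : fieldType) (d m : nat) (I : Rring K d m -> Prop).
Local Notation "x %:F" := (@FracField.tofrac (Kt K d) x).

Lemma ext_idealMl r g : ext_ideal I g -> ext_ideal I (r * g).
Proof.
case=> k [c [f [If ->]]]; exists k, (fun i => r * c i), f; split => //.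
by rewrite mulr_sumr; apply: eq_bigr => i _; rewrite mulrA.
Qed.

Lemma ext_ideal_embRS f : I f -> ext_ideal I (embRS f).
Proof.
by move=> If; exists 1%N, (fun _ => 1), (fun _ => f); rewrite big_ord1 mul1r.
Qed.

Lemma ext_ideal_clear_denom g : is_ideal I -> ext_ideal I g ->
  exists s r, [/\ s != 0, I r & (s%:F)%:MP * g = embRS r].
Proof.
case=> I0 ID IM [k [c [f [If ->]]]].
elim: k c f If => [|k IHk] c f If.
  by exists 1, 0; split; rewrite ?big_ord0 ?mulr0 ?rmorph0 ?oner_neq0.
rewrite big_ord_recr /=.
have [s1 [r1 [s1_neq0 Ir1 e1]]] :=
  IHk (c \o widen_ord (leqnSn k)) (f \o widen_ord (leqnSn k)) (fun i => If _).
have [s2 [a2 [s2_neq0 e2]]] := embRS_clear_denom (c ord_max).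
exists (s1 * s2), (s2%:MP * r1 + s1%:MP * (a2 * f ord_max)); split.
- by rewrite mulf_neq0.
- by apply: ID; apply: (IM) => //; apply: IM.
- by rewrite rmorphD !rmorphM /= !embRSC -e1 -e2; ring.
Qed.

Hypothesis primI : is_primary_ideal I.
Hypothesis indepI : t_independent I.

Lemma ext_ideal_embRSE h : ext_ideal I (embRS h) <-> I h.
Proof.
split; last exact: ext_ideal_embRS.
case: primI => idI _ primaryI.
case/(ext_ideal_clear_denom idI) => s [r [s_neq0 Ir]].
rewrite -embRSC -rmorphM => /embRS_inj rE.
have /primaryI[//|[k]] : I (h * s%:MP) by rewrite mulrC rE.
by rewrite -rmorphXn => /indepI /eqP; rewrite expf_eq0 (negbTE s_neq0) andbF.
Qed.

Lemma radical_ext_ideal_embRSE h : radical (ext_ideal I) (embRS h) <-> radical I h.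
Proof. by split=> -[k hk]; exists k; move: hk; rewrite -rmorphXn ext_ideal_embRSE. Qed.

Lemma lift_noetherian_ops (Idx : Type) (D : Idx -> WS K d m) (N : Idx -> WR K d m) :
  noetherian_ops (@derS K d m) (ext_ideal I) D ->
  (forall i, is_lift (N i) (D i)) ->
  noetherian_ops (@derR K d m) I N.
Proof.
move=> opsD liftN f.
have transfer i : radical I (act (@derR K d m) (N i) f)
    <-> radical (ext_ideal I) (act (@derS K d m) (D i) (embRS f)).
  have [u u_neq0 uE] := act_lift f (liftN i).
  rewrite -radical_ext_ideal_embRSE uE.
  apply: (radicalMl_unit ext_idealMl _ (mpolyC_tofrac_unit m u_neq0)).
rewrite -ext_ideal_embRSE opsD.
by split=> H i; apply/transfer.
Qed.

Lemma only_dx_noetherian_ops (Idx : Type) (N : Idx -> WR K d m) :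
  noetherian_ops (@derR K d m) I N ->
  (forall i, only_dx (N i)) ->
  noetherian_ops (@derS K d m) (ext_ideal I) (fun i => embW (N i)).
Proof.
move=> opsN dxN g.
have [s [f [s_neq0 fE]]] := embRS_clear_denom g.
have sU := mpolyC_tofrac_unit m s_neq0.
have transfer i : radical I (act (@derR K d m) (N i) f)
    <-> radical (ext_ideal I) (act (@derS K d m) (embW (N i)) g).
  rewrite -radical_ext_ideal_embRSE -act_embW -fE act_only_dx; last exact: dxN.
  apply: (radicalMl_unit ext_idealMl _ sU).
rewrite -(idealMl_unit ext_idealMl _ sU) fE ext_ideal_embRSE opsN.
by split=> H i; apply/transfer.
Qed.

End ExtendedIdeal.

Unset Implicit Arguments.

Theorem proposition3p13 (K : fieldType) (d m : nat) (I : Rring K d m -> Prop) :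
  [pchar K] =i pred0 ->
  is_primary_ideal I ->
  krull_dim I d ->
  t_independent I ->
  (forall (Idx : Type) (D : Idx -> WS K d m) (N : Idx -> WR K d m),
      noetherian_ops (@derS K d m) (ext_ideal I) D ->
      (forall i, is_lift (N i) (D i)) ->
      noetherian_ops (@derR K d m) I N) /\
  (forall (Idx : Type) (N : Idx -> WR K d m),
      noetherian_ops (@derR K d m) I N ->
      (forall i, only_dx (N i)) ->
      noetherian_ops (@derS K d m) (ext_ideal I) (fun i => embW (N i))).
Proof.
move=> _ primI _ indepI; split.
- exact: lift_noetherian_ops.
- exact: only_dx_noetherian_ops.
Qed.
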